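(* Let $p$ be a prime, let $A\subset\mathbb F_p$ be nonempty and let $\lambda$ be a probability measure on $\mathbb F_p$. Then $$\sum_{b\in\mathbb F_p^*}\lambda(b)\|1_A*1_{bA}\|_2\ll\left(\|\lambda\|_2+|A|^{-1/2}+|A|^{1/2}p^{-1/2}\right)^{c_0}|A|^{3/2},$$ with an absolute implied constant.
   Context: $\mathbb F_p^*=\mathbb F_p\setminus\{0\}$; $bA=\{ba:a\in A\}$; $1_A$ is the indicator function of $A$. A probability measure is $\lambda:\mathbb F_p\to\mathbb R_{\ge0}$ with $\sum\lambda=1$. $\|f\|_2=(\sum_{x\in\mathbb F_p}|f(x)|^2)^{1/2}$ and $f*g(x)=\sum_{y\in\mathbb F_p}f(y)g(x-y)$. $c_0>0$ is a fixed absolute constant (whose existence is a theorem of Bourgain) such that for every prime $p$ and all $A\subset\mathbb F_p$, $B\subset\mathbb F_p^*$ with $|A|\ge|B|$, $\sum_{b\in B}E(A,bA)\ll\min(p/|A|,|B|)^{-c_0}|A|^3|B|$, where $E(A,A')$ is the number of solutions of $a_1+a_1'=a_2+a_2'$ with $a_i\in A$, $a_i'\in A'$. *)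

From HB Require Import structures.
From mathcomp Require Import all_boot all_order all_algebra.
From mathcomp Require Import all_classical all_reals all_analysis.
Set Implicit Arguments. Unset Strict Implicit. Unset Printing Implicit Defensive.
Import Order.TTheory GRing.Theory Num.Theory.
Local Open Scope ring_scope.

Definition dilate (p : nat) (b : 'F_p) (A : {set 'F_p}) : {set 'F_p} :=
  [set b * a | a in A].

Definition indA (R : realType) (p : nat) (A : {set 'F_p}) (x : 'F_p) : R :=
  (x \in A)%:R.

Definition fconv (R : realType) (p : nat) (f g : 'F_p -> R) (x : 'F_p) : R :=
  \sum_(y : 'F_p) f y * g (x - y).

Definition l2norm (R : realType) (p : nat) (f : 'F_p -> R) : R :=
  Num.sqrt (\sum_(x : 'F_p) `|f x| ^+ 2).

Definition prob_measure (R : realType) (p : nat) (lam : 'F_p -> R) : Prop :=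
  (forall x, 0 <= lam x) /\ \sum_(x : 'F_p) lam x = 1.

Definition energy (p : nat) (A A' : {set 'F_p}) : nat :=
  #|[set t : 'F_p * 'F_p * 'F_p * 'F_p |
      [&& t.1.1.1 \in A, t.1.1.2 \in A', t.1.2 \in A, t.2 \in A'
        & t.1.1.1 + t.1.1.2 == t.1.2 + t.2]]|.

Definition bourgain_bound (R : realType) (c0 K : R) : Prop :=
  forall (p : nat) (A B : {set 'F_p}), prime p ->
    (0 < #|B|)%N -> (0 : 'F_p) \notin B -> (#|B| <= #|A|)%N ->
    (\sum_(b in B) (energy A (dilate b A))%:R : R)
      <= K * (Num.min ((p%:R : R) / #|A|%:R) #|B|%:R) `^ (- c0)
             * #|A|%:R ^+ 3 * #|B|%:R.

(* Let d be the bracket on the right-hand side and call b in F_p^* large when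
   ||1_A * 1_bA||_2^2, which is at most E(A, bA), exceeds K d^(2 c0) |A|^3.
   For a set B of large b with |B| <= |A|, Bourgain's bound forces
   (d^2 min(p/|A|, |B|))^c0 < 1; as d^2 >= |A|/p this means |B| d^2 < 1, and as
   d^2 >= 1/|A| it follows that there are at most |A| large b. Bourgain's bound for
   the set L of all of them then gives sum_L E(A, bA) <= K |A|^3 d^(2 c0 - 2), using
   c0 <= 1 (which Bourgain's bound itself forces), so AM-GM against
   sum_b lam(b)^2 <= d^2 bounds the sum over L. Every other term is at most
   lam(b) K d^c0 |A|^(3/2). *)

From HB Require Import structures.
From mathcomp Require Import all_boot all_order all_algebra.
From mathcomp Require Import all_classical all_reals all_analysis.
From mathcomp Require Import ring lra.
Import Order.TTheory GRing.Theory Num.Theory.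
Set Implicit Arguments. Unset Strict Implicit. Unset Printing Implicit Defensive.
Local Open Scope ring_scope.

Lemma mulr_le_amgm (R : realFieldType) (x y t : R) :
  0 < t -> x * y <= (t * x ^+ 2 + y ^+ 2 / t) / 2.
Proof.
move=> t_gt0; rewrite -subr_ge0.
have -> : (t * x ^+ 2 + y ^+ 2 / t) / 2 - x * y = (t * x - y) ^+ 2 / (2 * t).
  by field; rewrite gt_eqF.
by rewrite divr_ge0 ?sqr_ge0 ?mulr_ge0 ?ltW.
Qed.

Lemma exists_subset_card (T : finType) (A : {set T}) (k : nat) :
  (k <= #|A|)%N -> exists2 B : {set T}, B \subset A & #|B| = k.
Proof.
case/card_geqP => s [s_uniq s_size s_sub]; exists [set x in s].
  by apply/fintype.subsetP => x; rewrite inE => /s_sub.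
by rewrite cardsE (card_uniqP s_uniq).
Qed.

Lemma ler_sum_subset (R : numDomainType) (T : finType) (A B : {pred T}) (F : T -> R) :
  {subset A <= B} -> (forall i, i \in B -> 0 <= F i) ->
  \sum_(i in A) F i <= \sum_(i in B) F i.
Proof.
move=> AB F_ge0; rewrite [X in _ <= X](bigID (mem A)) /=.
have -> : \sum_(i in B | i \in A) F i = \sum_(i in A) F i.
  by apply: eq_bigl => i; rewrite andbC; apply/andb_idr/AB.
by rewrite lerDl sumr_ge0 // => i /andP[/F_ge0].
Qed.

Lemma powR_half (R : realType) (x : R) : 0 <= x -> x `^ (1/2) = Num.sqrt x.
Proof. by move=> x_ge0; rewrite div1r powR12_sqrt. Qed.

Lemma powR_3half (R : realType) (x : R) : 0 <= x -> x `^ (3/2) = x * Num.sqrt x.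
Proof.
move=> x_ge0; have -> : 3 / 2 = 1 + 2^-1 :> R by field.
rewrite powRD ?powRr1 ?powR12_sqrt //.
by rewrite (gt_eqF (_ : 0 < 1 + 2^-1)) // addr_gt0 ?invr_gt0.
Qed.

Lemma lt1_of_powR_lt1 (R : realType) (x r : R) : 0 < r -> x `^ r < 1 -> x < 1.
Proof.
move=> r_gt0; apply: contraTT; rewrite -!leNgt => x_ge1.
by rewrite -{1}(powRr0 x) ler_powR // ltW.
Qed.

Lemma exists_nat_powR_gt (R : realType) (e K : R) :
  0 < e -> exists2 m : nat, (0 < m)%N & K < m%:R `^ e.
Proof.
move=> e_gt0; set K1 := Num.max K 1.
have K1_ge0 : 0 <= K1 by rewrite le_max ler01 orbT.
exists (Num.truncn (K1 `^ e^-1)).+1 => //.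
apply: (@le_lt_trans _ _ K1); first by rewrite le_max lexx.
have := gt0_ltr_powR e_gt0 _ _ (truncnS_gt (K1 `^ e^-1)).
by rewrite !nnegrE powR_ge0 ler0n -powRrM mulVf ?gt_eqF // powRr1 //; apply.
Qed.

Section ThresholdArgument.

Variables (R : realType) (T : finType) (D : {set T}) (c0 K P s : R) (n : nat).
Variables (lam f E : T -> R).
Hypotheses (c0_gt0 : 0 < c0) (c0_le1 : c0 <= 1) (K_ge1 : 1 <= K).
Hypotheses (P_gt0 : 0 < P) (n_gt0 : (0 < n)%N) (s_ge0 : 0 <= s).
Hypotheses (lam_ge0 : forall i, 0 <= lam i) (lam_sum_le1 : \sum_(i in D) lam i <= 1).
Hypothesis lam_sqr_sum_le : \sum_(i in D) lam i ^+ 2 <= s ^+ 2.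
Hypotheses (f_ge0 : forall i, 0 <= f i) (f_sqr_le : forall i, f i ^+ 2 <= E i).
Hypothesis energy_bound : forall B : {set T},
  B \subset D -> (0 < #|B|)%N -> (#|B| <= n)%N ->
  \sum_(i in B) E i <= K * (Num.min (P / n%:R) #|B|%:R) `^ (- c0) * n%:R ^+ 3 * #|B|%:R.

Let a : R := n%:R.
Let d : R := s + (Num.sqrt a)^-1 + Num.sqrt a / Num.sqrt P.
Let u : R := d ^+ 2.
Let g : R := d `^ c0 * (a * Num.sqrt a).

Let a_gt0 : 0 < a. Proof. by rewrite ltr0n. Qed.

Let d_ge_terms : [/\ s <= d, (Num.sqrt a)^-1 <= d & Num.sqrt a / Num.sqrt P <= d].
Proof.
have w_ge0 : 0 <= (Num.sqrt a)^-1 by rewrite invr_ge0 sqrtr_ge0.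
have z_ge0 : 0 <= Num.sqrt a / Num.sqrt P by rewrite divr_ge0 ?sqrtr_ge0.
rewrite /d; split.
- by rewrite -addrA lerDl addr_ge0.
- by rewrite -addrA ler_wpDl // lerDl.
- by rewrite lerDr addr_ge0.
Qed.

Let u_gt0 : 0 < u.
Proof.
have [_ w_le _] := d_ge_terms.
by rewrite exprn_gt0 // (lt_le_trans _ w_le) // invr_gt0 sqrtr_gt0.
Qed.

Let sqr_le_u x : 0 <= x -> x <= d -> x ^+ 2 <= u.
Proof. by move=> x_ge0 x_le; rewrite lerXn2r ?nnegrE // (le_trans x_ge0). Qed.

Let one_le_u_a : 1 <= u * a.
Proof.
have [_ w_le _] := d_ge_terms.
have := sqr_le_u (ltW _) w_le; rewrite invr_gt0 sqrtr_gt0 a_gt0 => /(_ isT).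
by rewrite exprVn sqr_sqrtr ?(ltW a_gt0) // -div1r ler_pdivrMr.
Qed.

Let a_le_u_P : a <= u * P.
Proof.
have [_ _ z_le] := d_ge_terms.
have := sqr_le_u _ z_le; rewrite divr_ge0 ?sqrtr_ge0 // => /(_ isT).
by rewrite expr_div_n !sqr_sqrtr ?(ltW a_gt0) ?(ltW P_gt0) // ler_pdivrMr.
Qed.

Let g_sqr : g ^+ 2 = u `^ c0 * a ^+ 3.
Proof.
have d_ge0 : 0 <= d by have [s_le _ _] := d_ge_terms; exact: le_trans s_le.
rewrite !exprMn sqr_sqrtr ?(ltW a_gt0) // -exprSr; congr (_ * _).
by rewrite -powR_mulrn ?powR_ge0 // powRAC powR_mulrn.
Qed.

Let K_gt0 : 0 < K. Proof. exact: lt_le_trans K_ge1. Qed.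

Let large : {set T} := [set i in D | K * u `^ c0 * a ^+ 3 < f i ^+ 2].

Let large_subD : large \subset D.
Proof. by apply/fintype.subsetP => i; rewrite inE => /andP[]. Qed.

Let card_sub_large_lt (B : {set T}) :
  B \subset large -> (0 < #|B|)%N -> (#|B| <= n)%N -> #|B|%:R * u < 1.
Proof.
move=> B_sub B_gt0 B_le; set k : R := #|B|%:R.
set M := Num.min (P / a) k.
have k_gt0 : 0 < k by rewrite ltr0n.
have M_gt0 : 0 < M by rewrite lt_min k_gt0 divr_gt0.
have lower : (K * a ^+ 3 * k) * u `^ c0 < \sum_(i in B) E i.
  have -> : (K * a ^+ 3 * k) * u `^ c0 = \sum_(i in B) K * u `^ c0 * a ^+ 3.
    by rewrite sumr_const -mulr_natr -/k; ring.
  apply: ltr_sum => [|i /(fintype.subsetP B_sub)]; last first.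
    by rewrite inE => /andP[_ /lt_le_trans]; apply.
  by case/card_gt0P: B_gt0 => i iB; apply/hasP; exists i.
have upper : \sum_(i in B) E i <= (K * a ^+ 3 * k) * M `^ (- c0).
  have -> : (K * a ^+ 3 * k) * M `^ (- c0) = K * M `^ (- c0) * a ^+ 3 * k by ring.
  exact: energy_bound (fintype.subset_trans B_sub large_subD) B_gt0 B_le.
have := lt_le_trans lower upper; rewrite ltr_pM2l ?mulr_gt0 ?exprn_gt0 //.
rewrite powRN -div1r ltr_pdivlMr ?powR_gt0 // -powRM ?(ltW u_gt0) ?(ltW M_gt0) //.
move=> /(lt1_of_powR_lt1 c0_gt0); rewrite minr_pMr ?(ltW u_gt0) // gt_min mulrC.
by rewrite ltNge mulrAC ler_pdivlMr // mul1r [P * u]mulrC a_le_u_P /= mulrC.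
Qed.

Let card_large_le : (#|large| <= n)%N.
Proof.
rewrite leqNgt; apply/negP => n_lt.
have [B B_sub cardB] := exists_subset_card (ltnW n_lt).
have := card_sub_large_lt B_sub; rewrite cardB => /(_ n_gt0 (leqnn n)).
by rewrite -/a mulrC ltNge one_le_u_a.
Qed.

Let card_large_lt : #|large|%:R * u < 1.
Proof.
have [-> | large_gt0] := posnP #|large|; first by rewrite mul0r ltr01.
exact: card_sub_large_lt (subxx _) large_gt0 card_large_le.
Qed.

Let sum_E_large : \sum_(i in large) E i <= K * a ^+ 3 * (u `^ c0 / u).
Proof.
have rhs_ge0 : 0 <= K * a ^+ 3 * (u `^ c0 / u).
  by rewrite ltW // !mulr_gt0 ?exprn_gt0 ?invr_gt0 ?powR_gt0.
have [large0 | large_gt0] := posnP #|large|.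
  by rewrite (cards0_eq large0) big_set0.
set k : R := #|large|%:R.
have k_gt0 : 0 < k by rewrite ltr0n.
have ku_lt1 : k * u < 1 := card_large_lt.
apply: le_trans (energy_bound large_subD large_gt0 card_large_le) _; rewrite -/a -/k.
have -> : Num.min (P / a) k = k.
  apply/min_idPr; rewrite ler_pdivlMr // -(ler_pM2l u_gt0) mulrA [u * k]mulrC.
  by rewrite (le_trans _ a_le_u_P) // ler_piMl ?(ltW a_gt0) ?ltW.
have -> : K * k `^ (- c0) * a ^+ 3 * k = K * a ^+ 3 * (k / k `^ c0) by rewrite powRN; ring.
rewrite ler_wpM2l ?mulr_ge0 ?exprn_ge0 ?(ltW K_gt0) ?(ltW a_gt0) //.
rewrite ler_pdivrMr ?powR_gt0 // mulrAC ler_pdivlMr // mulrC.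
rewrite -powRM ?(ltW u_gt0) ?(ltW k_gt0) //.
by rewrite ger1_powR // mulr_gt0 //= mulrC (ltW ku_lt1).
Qed.

Let g_gt0 : 0 < g.
Proof.
have [_ w_le _] := d_ge_terms.
have d_gt0 : 0 < d by rewrite (lt_le_trans _ w_le) // invr_gt0 sqrtr_gt0.
by rewrite !mulr_gt0 ?powR_gt0 ?sqrtr_gt0.
Qed.

Let sum_large_le : \sum_(i in large) lam i * f i <= (1 + K) / 2 * g.
Proof.
have [s_le _ _] := d_ge_terms.
have sum_lam : \sum_(i in large) lam i ^+ 2 <= u.
  apply: le_trans (sqr_le_u s_ge0 s_le); apply: le_trans lam_sqr_sum_le.
  by apply: ler_sum_subset (fintype.subsetP large_subD) _ => i _; exact: sqr_ge0.
have sum_f : \sum_(i in large) f i ^+ 2 <= K * a ^+ 3 * (u `^ c0 / u).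
  by apply: le_trans sum_E_large; apply: ler_sum => i _.
set t := g / u.
have t_gt0 : 0 < t by rewrite divr_gt0.
apply: le_trans (ler_sum _ (fun i _ => mulr_le_amgm (lam i) (f i) t_gt0)) _.
rewrite -mulr_suml big_split /= -mulr_sumr -mulr_suml.
apply: le_trans (_ : (t * u + K * a ^+ 3 * (u `^ c0 / u) / t) / 2 <= _).
  by rewrite ler_pM2r // lerD ?ler_pM2l ?ler_pM2r ?invr_gt0.
rewrite /t divfK ?gt_eqF //.
have -> : K * a ^+ 3 * (u `^ c0 / u) / (g / u) = K * g.
  have -> : u `^ c0 = g ^+ 2 / a ^+ 3 by rewrite g_sqr mulfK ?expf_neq0 ?lt0r_neq0.
  by field; rewrite !lt0r_neq0.
by rewrite le_eqVlt; apply/orP; left; apply/eqP; field.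
Qed.

Let sum_small_le : \sum_(i in D :\: large) lam i * f i <= K * g.
Proof.
have Kg_ge0 : 0 <= K * g by rewrite ltW // mulr_gt0.
apply: le_trans (_ : \sum_(i in D :\: large) lam i * (K * g) <= _).
  apply: ler_sum => i; rewrite !inE negb_and -leNgt => /andP[/orP[iDn | f_le] iD].
    by rewrite iD in iDn.
  rewrite ler_wpM2l // -(ler_pXn2r (isT : (0 < 2)%N)) ?nnegrE //.
  apply: le_trans f_le _; rewrite exprMn g_sqr -mulrA.
  rewrite ler_wpM2r ?mulr_ge0 ?powR_ge0 ?exprn_ge0 ?(ltW a_gt0) //.
  by rewrite expr2 ler_peMr ?(ltW K_gt0).
rewrite -mulr_suml ler_piMl //; apply: le_trans lam_sum_le1.
by apply: ler_sum_subset (fintype.subsetP (subsetDl _ _)) _ => i _.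
Qed.

Lemma weighted_sum_le_of_subset_bound :
  \sum_(i in D) lam i * f i
    <= 2 * K * (s + (Num.sqrt n%:R)^-1 + Num.sqrt n%:R / Num.sqrt P) `^ c0
         * (n%:R * Num.sqrt n%:R).
Proof.
rewrite -[X in _ <= X]mulrA; change (\sum_(i in D) lam i * f i <= 2 * K * g).
rewrite (big_setID large) (finset.setIidPr large_subD) /=.
apply: le_trans (lerD sum_large_le sum_small_le) _.
rewrite -subr_ge0.
have -> : 2 * K * g - ((1 + K) / 2 * g + K * g) = (K - 1) / 2 * g by field.
by rewrite mulr_ge0 ?divr_ge0 ?subr_ge0 // ltW.
Qed.

End ThresholdArgument.

Lemma sqr_l2norm (R : realType) (p : nat) (f : 'F_p -> R) :
  l2norm f ^+ 2 = \sum_x f x ^+ 2.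
Proof.
rewrite sqr_sqrtr; last by apply: sumr_ge0 => x _; exact: sqr_ge0.
by apply: eq_bigr => x _; rewrite real_normK ?num_real.
Qed.

Lemma sqr_l2norm_conv_indA_le_energy (R : realType) (p : nat) (A A' : {set 'F_p}) :
  l2norm (fconv (@indA R p A) (@indA R p A')) ^+ 2 <= (energy A A')%:R.
Proof.
set triples := [set t : 'F_p * 'F_p * 'F_p |
  [&& t.1.2 \in A, t.1.1 - t.1.2 \in A', t.2 \in A & t.1.1 - t.2 \in A']].
have -> : l2norm (fconv (@indA R p A) (@indA R p A')) ^+ 2 = #|triples|%:R.
  rewrite sqr_l2norm.
  transitivity (\sum_(x : 'F_p) \sum_(y : 'F_p) \sum_(z : 'F_p)
                  (((x, y, z) \in triples) : nat)%:R : R).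
    apply: eq_bigr => x _; rewrite expr2 mulr_suml.
    apply: eq_bigr => y _; rewrite mulr_sumr; apply: eq_bigr => z _.
    rewrite inE /= /indA -!natrM !mulnb.
    by case: (y \in A); case: (x - y \in A'); case: (z \in A); case: (x - z \in A').
  rewrite pair_big pair_big -sum1_card natr_sum [RHS]big_mkcond.
  by apply: eq_bigr => -[[x y] z] _; case: ifP.
rewrite ler_nat.
pose g (t : 'F_p * 'F_p * 'F_p) := (t.1.2, t.1.1 - t.1.2, t.2, t.1.1 - t.2).
have g_inj : injective g.
  move=> [[x y] z] [[x' y'] z'] E.
  have ey : y = y' := congr1 (fun t => t.1.1.1) E.
  have exy : x - y = x' - y' := congr1 (fun t => t.1.1.2) E.
  have ez : z = z' := congr1 (fun t => t.1.2) E.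
  by rewrite -(subrK y x) -(subrK y' x') exy ey ez.
rewrite -(card_imset triples g_inj); apply: subset_leq_card.
apply/fintype.subsetP => _ /imsetP [[[x y] z] + ->]; rewrite !inE /= => /and4P [-> -> -> ->] /=.
by rewrite !subrKC.
Qed.

Lemma card_dilate (p : nat) (A : {set 'F_p}) (b : 'F_p) :
  b != 0 -> #|dilate b A| = #|A|.
Proof. by move=> b0; rewrite card_imset //; apply: mulfI. Qed.

Lemma card_mul_le_energy (p : nat) (A A' : {set 'F_p}) :
  (#|A| * #|A'| <= energy A A')%N.
Proof.
rewrite -cardsX.
pose h (t : 'F_p * 'F_p) := (t.1, t.2, t.1, t.2).
have h_inj : injective h by move=> [x y] [x' y'] [-> ->].
rewrite -(card_imset _ h_inj); apply: subset_leq_card.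
by apply/fintype.subsetP => _ /imsetP [[x y] + ->]; rewrite !inE /= => /andP [-> ->] /=.
Qed.

Lemma exists_Fp_set_card_without0 (m : nat) :
  exists (p : nat) (A : {set 'F_p}),
    [/\ prime p, #|A| = m, (0 : 'F_p) \notin A & (m * m < p)%N].
Proof.
have [p mm_lt_p p_pr] := prime_above (m * m).
have lt_p (i : 'I_m) : ((val i).+1 < p)%N.
  apply: leq_ltn_trans mm_lt_p; apply: leq_trans (ltn_ord i) _.
  by rewrite leq_pmulr // (leq_ltn_trans _ (ltn_ord i)).
pose emb (i : 'I_m) : 'F_p := (val i).+1%:R.
have emb_val i : nat_of_ord (emb i) = (val i).+1.
  by rewrite /emb (val_Fp_nat p_pr) modn_small.
have emb_inj : injective emb.
  by move=> i j /(congr1 (@nat_of_ord _)); rewrite !emb_val => -[/val_inj].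
exists p, [set emb i | i : 'I_m]; split=> //.
  by rewrite card_imset // card_ord.
by apply/imsetP => -[i _ /(congr1 (@nat_of_ord _))]; rewrite emb_val.
Qed.

Lemma bourgain_exponent_le1 (R : realType) (c0 K : R) :
  0 < c0 -> bourgain_bound c0 K -> c0 <= 1.
Proof.
move=> c0_gt0 bound; rewrite leNgt; apply/negP; rewrite -subr_gt0 => e_gt0.
have [m m_gt0 K_lt] := exists_nat_powR_gt K e_gt0.
have [p [A [p_pr cardA A0 mm_lt_p]]] := exists_Fp_set_card_without0 m.
have mR_gt0 : (0 : R) < m%:R by rewrite ltr0n.
have := bound p A A p_pr; rewrite cardA => /(_ m_gt0 A0 (leqnn m)).
have -> : Num.min ((p%:R : R) / m%:R) m%:R = m%:R.
  by apply/min_idPr; rewrite ler_pdivlMr // -natrM ler_nat ltnW.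
have energy_ge : ((m ^ 3)%:R : R) <= \sum_(b in A) (energy A (dilate b A))%:R.
  have -> : ((m ^ 3)%:R : R) = \sum_(b in A) (#|A| * #|A|)%:R.
    by rewrite sumr_const cardA -mulrnA !expnS expn0 muln1 mulnA.
  apply: ler_sum => b bA; rewrite ler_nat -{2}(@card_dilate _ A b) ?card_mul_le_energy //.
  by apply: contraNneq A0 => <-.
move=> /(le_trans energy_ge); apply/negP; rewrite -ltNge natrX.
have q_gt0 : (0 : R) < m%:R `^ (c0 - 1) by rewrite powR_gt0.
rewrite powRN -(mulr_powRB1 (ltW mR_gt0) c0_gt0).
have -> : K * (m%:R * m%:R `^ (c0 - 1))^-1 * m%:R ^+ 3 * m%:R
          = m%:R ^+ 3 * (K / m%:R `^ (c0 - 1)) :> R.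
  by field; rewrite !gt_eqF.
by rewrite gtr_pMr ?exprn_gt0 // ltr_pdivrMr // mul1r.
Qed.

Lemma bourgain_bound_max1 (R : realType) (c0 K : R) :
  bourgain_bound c0 K -> bourgain_bound c0 (Num.max K 1).
Proof.
move=> bound p A B p_pr B_gt0 B0 B_le; apply: le_trans (bound p A B p_pr B_gt0 B0 B_le) _.
by rewrite -!mulrA ler_wpM2r ?le_max ?lexx // !mulr_ge0 ?powR_ge0 ?exprn_ge0.
Qed.

Theorem corollary2 (R : realType) (c0 K : R) :
  0 < c0 -> bourgain_bound c0 K ->
  exists C : R, 0 < C /\
    forall (p : nat) (A : {set 'F_p}) (lam : 'F_p -> R),
      prime p -> (0 < #|A|)%N -> prob_measure lam ->
      \sum_(b : 'F_p | b != 0)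
          lam b * l2norm (fconv (@indA R p A) (@indA R p (dilate b A)))
        <= C * (l2norm lam + (#|A|%:R : R) `^ (- (1/2))
                 + (#|A|%:R : R) `^ (1/2) * (p%:R : R) `^ (- (1/2))) `^ c0
             * (#|A|%:R : R) `^ (3/2).
Proof.
move=> c0_gt0 bound; have c0_le1 := bourgain_exponent_le1 c0_gt0 bound.
have K1_ge1 : 1 <= Num.max K 1 by rewrite le_max lexx orbT.
exists (2 * Num.max K 1); split; first by rewrite mulr_gt0 // (lt_le_trans ltr01).
move=> p A lam p_pr A_gt0 [lam_ge0 lam_sum1].
rewrite !powRN !powR_half ?ler0n // powR_3half ?ler0n // -big_set /=.
apply: weighted_sum_le_of_subset_bound => //.
- by rewrite ltr0n prime_gt0.
- exact: sqrtr_ge0.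
- by rewrite -lam_sum1; apply: ler_sum_subset (fun b _ => isT) _ => b _.
- by rewrite sqr_l2norm; apply: ler_sum_subset (fun b _ => isT) _ => b _; exact: sqr_ge0.
- by move=> b; exact: sqrtr_ge0.
- by move=> b; exact: sqr_l2norm_conv_indA_le_energy.
move=> B B_sub B_gt0 B_le; apply: bourgain_bound_max1 bound _ _ _ p_pr B_gt0 _ B_le.
by apply/negP => /(fintype.subsetP B_sub); rewrite inE eqxx.
Qed.
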